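(* Let $n\ge2$, $G=\langle a_1,\ldots,a_n\mid a_1^2\cdots a_n^2\rangle$, $p=a_1^2\cdots a_n^2$, and let $P$ be the free resolution $0\to P_2\xrightarrow{d_2}P_1\xrightarrow{d_1}P_0\xrightarrow{\varepsilon}\mathbb{Z}\to0$ of $\mathbb{Z}$ over $\mathbb{Z}G$ with $P_0=\mathbb{Z}G\,x$, $P_1$ free on $y_1,\ldots,y_n$, $P_2=\mathbb{Z}G\,w$, $\varepsilon(x)=1$, $d_1(y_i)=(a_i-1)x$, $d_2(w)=\sum_{i=1}^n\frac{\partial p}{\partial a_i}y_i$. Then there is a diagonal approximation $\Delta\colon P\to P\otimes P$ such that $\Delta_0(x)=x\otimes x$, $\Delta_1(y_i)=y_i\otimes a_ix+x\otimes y_i$, $\Delta_{02}(w)=x\otimes w$, and \begin{align*} \Delta_{11}(w)=\sum_{i=1}^n\Bigl[&\Bigl(\sum_{j=1}^{i-1}(a_1^2\cdots a_{j-1}^2)(1+a_j)y_j\otimes(a_1^2\cdots a_{i-1}^2)y_i\Bigr)\\ &+\Bigl(\sum_{j=1}^{i-1}(a_1^2\cdots a_{j-1}^2)(1+a_j)y_j\otimes(a_1^2\cdots a_{i-1}^2)a_iy_i\Bigr)\\ &+(a_1^2\cdots a_{i-1}^2)y_i\otimes(a_1^2\cdots a_{i-1}^2)a_iy_i\Bigr]. \end{align*}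
   Context: Fox derivatives: $\partial g_j/\partial g_i=\delta_{ij}$, $\partial(uv)/\partial g_i=\partial u/\partial g_i+u\,\partial v/\partial g_i$, then passed to $\mathbb{Z}G$. $P\otimes P$ has $(P\otimes P)_m=\bigoplus_{r+s=m}P_r\otimes_{\mathbb{Z}}P_s$ with diagonal $G$-action, differential $\partial(u\otimes v)=du\otimes v+(-1)^ru\otimes dv$ ($u\in P_r$) and augmentation $\varepsilon\otimes\varepsilon$. A diagonal approximation is a $\mathbb{Z}G$-chain map $\Delta\colon P\to P\otimes P$ with $(\varepsilon\otimes\varepsilon)\Delta_0=\varepsilon$; $\Delta_{rs}$ is $\Delta_{r+s}$ followed by projection onto $P_r\otimes P_s$. Empty products equal $1$ and empty sums $0$. *)

From HB Require Import structures.
From mathcomp Require Import all_boot all_order.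
From mathcomp Require Import ssralg ssrint.

Set Implicit Arguments.
Unset Strict Implicit.
Unset Printing Implicit Defensive.

Import GRing.Theory.
Local Open Scope ring_scope.

(* Words in the generators a_0..a_{n-1} (0-indexed; a_i of the paper is    *)
(* a (i-1) here).  A letter (i, false) is a_i, (i, true) is a_i^{-1}.       *)
Definition letter (n : nat) := ('I_n * bool)%type.
Definition word (n : nat) := seq (letter n).

Section Group.
Variables (G : groupType) (n : nat) (a : 'I_n -> G).

Definition eval_letter (l : letter n) : G :=
  if l.2 then inv (a l.1) else a l.1.

Definition eval_word (w : word n) : G :=
  foldr (fun l g => mul (eval_letter l) g) one w.

End Group.

Definition relator (n : nat) : word n :=
  flatten [seq [:: (i, false); (i, false)] | i <- enum 'I_n].

Definition group_hom (G H : groupType) (f : G -> H) : Prop :=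
  forall x y, f (mul x y) = mul (f x) (f y).

Definition is_presented (G : groupType) (n : nat) (a : 'I_n -> G)
    (r : word n) : Prop :=
  eval_word a r = one /\
  forall (H : groupType) (b : 'I_n -> H), eval_word b r = one ->
    exists f : G -> H,
      [/\ group_hom f, (forall i, f (a i) = b i) &
          forall f' : G -> H, group_hom f' -> (forall i, f' (a i) = b i) ->
            forall x, f' x = f x].

(* Free abelian groups as finite formal Z-linear combinations, compared     *)
(* coefficient-wise.                                                         *)
Definition fsum (K : Type) := seq (int * K).

Definition coef (K : eqType) (s : fsum K) (k : K) : int :=
  \sum_(p <- s) (if p.2 == k then p.1 else 0).

Definition feq (K : eqType) (s t : fsum K) : Prop :=
  forall k, coef s k = coef t k.

Definition fscale (K : Type) (c : int) (s : fsum K) : fsum K :=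
  [seq (c * p.1, p.2) | p <- s].

Definition ZG (G : groupType) := fsum G.

Definition zg_mul (G : groupType) (r s : ZG G) : ZG G :=
  [seq (p.1 * q.1, mul p.2 q.2) | p <- r, q <- s].

Definition zg_of (G : groupType) (g : G) : ZG G := [:: (1, g)].

Section Fox.
Variables (G : groupType) (n : nat) (a : 'I_n -> G) (i : 'I_n).

Definition fox_letter (l : letter n) : ZG G :=
  if l.1 == i then (if l.2 then [:: (-1, inv (a l.1))] else [:: (1, one)])
  else [::].

Fixpoint fox (w : word n) : ZG G :=
  match w with
  | [::] => [::]
  | l :: w' => fox_letter l ++ zg_mul (zg_of (eval_letter a l)) (fox w')
  end.
End Fox.

Inductive gen (n : nat) := GX | GY of 'I_n | GW.
Arguments GX {n}. Arguments GW {n}.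

Definition gen_enc n (e : gen n) : option (option 'I_n) :=
  match e with GX => None | GY i => Some (Some i) | GW => Some None end.
Definition gen_dec n (o : option (option 'I_n)) : gen n :=
  match o with None => GX | Some (Some i) => GY i | Some None => GW end.
Lemma gen_encK n : cancel (@gen_enc n) (@gen_dec n).
Proof. by case. Qed.
HB.instance Definition _ n := Equality.copy (gen n) (can_type (@gen_encK n)).

Definition gdeg n (e : gen n) : nat :=
  match e with GX => 0 | GY _ => 1 | GW => 2 end.

Section Resolution.
Variables (G : groupType) (n : nat) (a : 'I_n -> G).

(* Elements of P (all degrees): Z-combinations of g.e, g in G, e a generator;
   P_r is free over ZG on the generators of degree r. *)
Definition Pel := fsum (G * gen n).

Definition Pact (g : G) (s : Pel) : Pel := [seq (p.1, (mul g p.2.1, p.2.2)) | p <- s].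

Definition Pgen (r : ZG G) (e : gen n) : Pel := [seq (p.1, (p.2, e)) | p <- r].

Definition dgen (e : gen n) : Pel :=
  match e with
  | GX => [::]
  | GY i => [:: (1, (a i, GX)); (-1, (one, GX))]
  | GW => flatten [seq Pgen (fox a i (relator n)) (GY i) | i <- enum 'I_n]
  end.

Definition dP1 (u : G * gen n) : Pel := Pact u.1 (dgen u.2).

Definition dP (s : Pel) : Pel := flatten [seq fscale p.1 (dP1 p.2) | p <- s].

(* Elements of P (x) P: Z-combinations of (g.e) (x) (h.f); this is the free
   abelian group \bigoplus_{r,s} P_r (x)_Z P_s. *)
Definition Tel := fsum ((G * gen n) * (G * gen n)).

Definition Tact (g : G) (t : Tel) : Tel :=
  [seq (p.1, ((mul g p.2.1.1, p.2.1.2), (mul g p.2.2.1, p.2.2.2))) | p <- t].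

Definition Ttens (r : ZG G) (e : gen n) (s : ZG G) (f : gen n) : Tel :=
  [seq (p.1 * q.1, ((p.2, e), (q.2, f))) | p <- r, q <- s].

Definition dT1 (u v : G * gen n) : Tel :=
  [seq (q.1, (q.2, v)) | q <- dP1 u] ++
  [seq ((-1) ^+ gdeg u.2 * q.1, (u, q.2)) | q <- dP1 v].

Definition dT (t : Tel) : Tel := flatten [seq fscale p.1 (dT1 p.2.1 p.2.2) | p <- t].

Definition epsT (t : Tel) : int :=
  \sum_(p <- t | (p.2.1.2 == GX) && (p.2.2.2 == GX)) p.1.

Definition homog (m : nat) (t : Tel) : Prop :=
  forall k, coef t k != 0 -> gdeg k.1.2 + gdeg k.2.2 = m.

Definition proj (r s : nat) (t : Tel) : Tel :=
  [seq p <- t | (gdeg p.2.1.2 == r) && (gdeg p.2.2.2 == s)].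

(* A ZG-linear map P -> P (x) P, given by the images D e of the free
   generators, extended ZG-linearly (diagonal action on P (x) P). *)
Definition extend (D : gen n -> Tel) (s : Pel) : Tel :=
  flatten [seq fscale p.1 (Tact p.2.1 (D p.2.2)) | p <- s].

Definition diag_approx (D : gen n -> Tel) : Prop :=
  [/\ forall e, homog (gdeg e) (D e),
      forall e, feq (dT (D e)) (extend D (dgen e)) &
      epsT (D GX) = 1].

(* a_1^2 ... a_{j-1}^2 (paper's indexing), i.e. prod_{k < j} a_k^2 here *)
Definition pre (j : 'I_n) : G :=
  \big[mul/one]_(k < n | (k < j)%N) mul (a k) (a k).

Definition Delta11w : Tel :=
  flatten [seq
    flatten [seq Ttens [:: (1, pre j); (1, mul (pre j) (a j))] (GY j)
                       (zg_of (pre i)) (GY i) | j : 'I_n <- enum 'I_n & (j < i)%N]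
    ++ flatten [seq Ttens [:: (1, pre j); (1, mul (pre j) (a j))] (GY j)
                       (zg_of (mul (pre i) (a i))) (GY i) | j : 'I_n <- enum 'I_n & (j < i)%N]
    ++ Ttens (zg_of (pre i)) (GY i) (zg_of (mul (pre i) (a i))) (GY i)
  | i <- enum 'I_n].

End Resolution.

(* d(Delta w) and Delta(d w) are compared coefficient by coefficient on the
   Z-basis {g.e (x) h.f} of P (x) P.  With p_i = a_1^2 ... a_(i-1)^2 the Fox
   derivative of the relator is dp/da_i = p_i (1 + a_i), so
   Y_i := (dp/da_i) y_i has d Y_i = p_(i+1) x - p_i x.  The first two sums of
   Delta_11(w) are sum_(j<i) Y_j (x) Y_i; their boundaries telescope in j
   (to p_i x - x) and, after exchanging the sums, in i (to p_n x - p_(j+1) x,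
   where p_n = 1 is the relation).  What remains cancels against
   Delta(d w) = sum_i p_i (1 + a_i) Delta(y_i) term by term. *)
From HB Require Import structures.
From mathcomp Require Import all_boot all_order.
From mathcomp Require Import ssralg ssrint.
From mathcomp Require Import ring.

Set Implicit Arguments.
Unset Strict Implicit.
Unset Printing Implicit Defensive.
Import GRing.Theory.
Local Open Scope ring_scope.

Section Telescope.
Variables (V : zmodType) (f : nat -> V) (m : nat).

Lemma telescope_ord_below i : (i <= m)%N ->
  \sum_(j < m | (j < i)%N) (f j.+1 - f j) = f i - f 0.
Proof.
by move=> le_im; rewrite -telescope_sumr // (big_nat_widen 0 i m predT _ le_im) big_mkord.
Qed.

Lemma telescope_ord_above j : (j < m)%N ->
  \sum_(i < m | (j < i)%N) (f i.+1 - f i) = f m - f j.+1.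
Proof. by move=> lt_jm; rewrite -telescope_sumr // big_geq_mkord. Qed.

End Telescope.

(* The coefficient identity behind d Delta(w) = Delta(d w): X, Ya, Yb, Z stand
   for the coefficients of p_m x, p_i y_i, p_i a_i y_i, p_i a_i x in the left (1)
   and right (2) tensor factor. *)
Lemma sum_lower_triangle_telescope (R : comPzRingType) n (X1 X2 : nat -> R)
    (Ya1 Yb1 Z1 Ya2 Yb2 Z2 : 'I_n -> R) :
  X1 0%N * (\sum_(i < n) (Ya2 i + Yb2 i))
  + \sum_(i < n) (\sum_(j < n | (j < i)%N)
                    ((X1 j.+1 - X1 j) * (Ya2 i + Yb2 i)
                     - (Ya1 j + Yb1 j) * (X2 i.+1 - X2 i))
                  + ((Z1 i - X1 i) * Yb2 i - Ya1 i * (X2 i.+1 - Z2 i)))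
  + (\sum_(i < n) (Ya1 i + Yb1 i)) * X2 n
  = \sum_(i < n) (Ya1 i * Z2 i + X1 i * Ya2 i + Yb1 i * X2 i.+1 + Z1 i * Yb2 i).
Proof.
have inner (i : 'I_n) : \sum_(j < n | (j < i)%N)
      ((X1 j.+1 - X1 j) * (Ya2 i + Yb2 i) - (Ya1 j + Yb1 j) * (X2 i.+1 - X2 i))
    = (X1 i - X1 0%N) * (Ya2 i + Yb2 i)
      - (\sum_(j < n | (j < i)%N) (Ya1 j + Yb1 j)) * (X2 i.+1 - X2 i).
  by rewrite sumrB -!mulr_suml telescope_ord_below // ltnW.
have swap : \sum_(i < n) (\sum_(j < n | (j < i)%N) (Ya1 j + Yb1 j)) * (X2 i.+1 - X2 i)
    = \sum_(j < n) (Ya1 j + Yb1 j) * (X2 n - X2 j.+1).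
  under eq_bigr => i _ do rewrite mulr_suml big_mkcond.
  rewrite exchange_big; apply: eq_bigr => j _.
  by rewrite -big_mkcond -mulr_sumr telescope_ord_above.
under [X in _ + X + _]eq_bigr => i _ do rewrite inner addrAC.
rewrite sumrB swap mulr_sumr mulr_suml -sumrB -!big_split /=.
by apply: eq_bigr => i _; ring.
Qed.

Section Pairing.
Variable T : Type.

Definition fpair (Phi : T -> int) (s : fsum T) : int := \sum_(p <- s) p.1 * Phi p.2.

Lemma fpair_nil Phi : fpair Phi [::] = 0.
Proof. by rewrite /fpair big_nil. Qed.

Lemma fpair_cons Phi c u s : fpair Phi ((c, u) :: s) = c * Phi u + fpair Phi s.
Proof. by rewrite /fpair big_cons. Qed.

Lemma fpair_cat Phi s t : fpair Phi (s ++ t) = fpair Phi s + fpair Phi t.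
Proof. by rewrite /fpair big_cat. Qed.

Lemma fpair_flatten Phi (ss : seq (fsum T)) :
  fpair Phi (flatten ss) = \sum_(s <- ss) fpair Phi s.
Proof. by rewrite /fpair big_flatten. Qed.

Lemma eq_fpair Phi Psi s : Phi =1 Psi -> fpair Phi s = fpair Psi s.
Proof. by move=> ePhi; apply: eq_bigr => p _; rewrite ePhi. Qed.

End Pairing.

Section Coefficients.
Variable K : eqType.

Definition kdelta (u k : K) : int := if u == k then 1 else 0.

Lemma coefE (s : fsum K) k : coef s k = fpair (kdelta^~ k) s.
Proof.
by apply: eq_bigr => -[c u] _; rewrite /kdelta /=; case: eqP; rewrite ?mulr1 ?mulr0.
Qed.

Lemma coef_cat (s t : fsum K) k : coef (s ++ t) k = coef s k + coef t k.
Proof. by rewrite /coef big_cat. Qed.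

Lemma coef_fscale c (s : fsum K) k : coef (fscale c s) k = c * coef s k.
Proof. by rewrite !coefE /fpair big_map mulr_sumr; apply: eq_bigr => p _; rewrite mulrA. Qed.

Lemma coef_linear (I : Type) (F : I -> fsum K) (s : fsum I) k :
  coef (flatten [seq fscale p.1 (F p.2) | p <- s]) k = fpair (fun u => coef (F u) k) s.
Proof.
rewrite /coef big_flatten big_map; apply: eq_bigr => p _.
by rewrite -[\sum_(_ <- fscale _ _) _]/(coef _ _) coef_fscale.
Qed.

End Coefficients.

Lemma kdelta_pair (K1 K2 : eqType) (u k1 : K1) (v k2 : K2) :
  kdelta (u, v) (k1, k2) = kdelta u k1 * kdelta v k2.
Proof. by rewrite /kdelta xpair_eqE; case: (u == k1); case: (v == k2). Qed.

Definition square_word (n : nat) (i : 'I_n) : word n := [:: (i, false); (i, false)].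

Section Relator.
Variables (G : groupType) (n : nat) (a : 'I_n -> G).

Lemma eval_word_cat (w1 w2 : word n) :
  eval_word a (w1 ++ w2) = mul (eval_word a w1) (eval_word a w2).
Proof. by elim: w1 => [|l w1 IH] /=; rewrite ?mul1g // IH mulgA. Qed.

Lemma relatorE : relator n = flatten [seq square_word k | k <- enum 'I_n].
Proof. by []. Qed.

(* [prefix_prod m] is p_(m+1) = a_1^2 ... a_m^2 in the paper's indexing. *)
Definition prefix_prod (m : nat) : G :=
  eval_word a (flatten [seq square_word k | k <- take m (enum 'I_n)]).

Lemma prefix_prod0 : prefix_prod 0 = one.
Proof. by rewrite /prefix_prod take0. Qed.

Lemma prefix_prod_relator : eval_word a (relator n) = one -> prefix_prod n = one.
Proof. by rewrite /prefix_prod take_oversize ?size_enum_ord. Qed.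

Lemma prefix_prodS (j : 'I_n) : mul (mul (prefix_prod j) (a j)) (a j) = prefix_prod j.+1.
Proof.
rewrite /prefix_prod (take_nth j) ?size_enum_ord // -cats1 map_cat flatten_cat.
by rewrite eval_word_cat nth_ord_enum /= /eval_letter /= mulg1 mulgA.
Qed.

Lemma filter_enum_ord_lt (i : nat) : (i <= n)%N ->
  [seq k : 'I_n <- enum 'I_n | (k < i)%N] = take i (enum 'I_n).
Proof.
move=> le_in; apply: (inj_map val_inj).
rewrite map_take -(filter_map val (fun k => k < i)%N) val_enum_ord.
rewrite -(subnKC le_in) iotaD filter_cat take_size_cat ?size_iota //.
rewrite (all_filterP _) ?(eq_in_filter (a2 := pred0)) ?filter_pred0 ?cats0 //.
- by move=> k; rewrite mem_iota => /andP[/leq_gtF ->].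
- by apply/allP => k; rewrite mem_iota.
Qed.

Lemma eval_square_words (s : seq 'I_n) :
  eval_word a (flatten [seq square_word k | k <- s])
  = \big[mul/one]_(k <- s) mul (a k) (a k).
Proof.
elim: s => [|k s IH]; first by rewrite big_nil.
by rewrite big_cons /= IH /eval_letter /= mulgA.
Qed.

Lemma pre_prefix_prod (i : 'I_n) : pre a i = prefix_prod i.
Proof.
rewrite /pre /prefix_prod eval_square_words.
by rewrite -(filter_enum_ord_lt (ltnW (ltn_ord i))) big_filter enumT.
Qed.

End Relator.

Lemma flatten_cons (T : Type) (x : seq T) (ss : seq (seq T)) :
  flatten (x :: ss) = x ++ flatten ss.
Proof. by []. Qed.

Section FoxRelator.
Variables (G : groupType) (n : nat) (a : 'I_n -> G) (i : 'I_n).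

Lemma fpair_zg_of_mul (Phi : G -> int) h r :
  fpair Phi (zg_mul (zg_of h) r) = fpair (fun g => Phi (mul h g)) r.
Proof. by rewrite /zg_mul /= cats0 /fpair big_map; apply: eq_bigr => q _; rewrite mul1r. Qed.

(* Fox's product rule d(uv) = du + u dv, tested against Phi. *)
Lemma fox_cat Phi (w1 w2 : word n) :
  fpair Phi (fox a i (w1 ++ w2))
  = fpair Phi (fox a i w1) + fpair (fun g => Phi (mul (eval_word a w1) g)) (fox a i w2).
Proof.
have fox_cons l w : fox a i (l :: w)
    = fox_letter a i l ++ zg_mul (zg_of (eval_letter a l)) (fox a i w) by [].
elim: w1 Phi => [|l w1 IH] Phi.
  by rewrite fpair_nil add0r; apply: eq_fpair => g; rewrite mul1g.
rewrite cat_cons !fox_cons !(fpair_cat _ (fox_letter _ _ _)) !fpair_zg_of_mul IH addrA.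
congr (_ + _).
by apply: eq_fpair => g; rewrite mulgA.
Qed.

Lemma fox_square_word Phi j :
  fpair Phi (fox a i (square_word j)) = if j == i then Phi one + Phi (a j) else 0.
Proof.
rewrite /= /fox_letter /= /eval_letter /=.
by case: (j == i); rewrite /fpair /= ?big_cons ?big_nil /= ?mul1r ?mulg1 ?addr0.
Qed.

Lemma fox_square_words_notin Phi (s : seq 'I_n) :
  i \notin s -> fpair Phi (fox a i (flatten [seq square_word k | k <- s])) = 0.
Proof.
elim: s Phi => [|j s IH] Phi; first by rewrite fpair_nil.
rewrite in_cons negb_or => /andP[ne_ij notin_s].
by rewrite map_cons flatten_cons fox_cat fox_square_word eq_sym (negbTE ne_ij) IH // addr0.
Qed.

Lemma fox_relator Phi :
  fpair Phi (fox a i (relator n))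
  = Phi (prefix_prod a i) + Phi (mul (prefix_prod a i) (a i)).
Proof.
have enum_split : enum 'I_n = take i (enum 'I_n) ++ i :: drop i.+1 (enum 'I_n).
  by rewrite -{1}(cat_take_drop i (enum 'I_n)) (drop_nth i) ?size_enum_ord // nth_ord_enum.
have notin_take : i \notin take i (enum 'I_n).
  rewrite -(mem_map (@ord_inj n)) map_take val_enum_ord take_iota mem_iota.
  by rewrite (minn_idPl (ltnW (ltn_ord i))) ltnn andbF.
have notin_drop : i \notin drop i.+1 (enum 'I_n).
  by rewrite -(mem_map (@ord_inj n)) map_drop val_enum_ord drop_iota mem_iota ltnn.
rewrite relatorE enum_split map_cat flatten_cat map_cons flatten_cons !fox_cat.
by rewrite fox_square_word eqxx !fox_square_words_notin // add0r addr0 /= !mulg1.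
Qed.

End FoxRelator.

Lemma homog_all (G : groupType) n m (t : Tel G n) :
  all (fun p => gdeg p.2.1.2 + gdeg p.2.2.2 == m)%N t -> homog m t.
Proof.
move=> /allP deg_t k; rewrite coefE.
case: (boolP (has (fun p => p.2 == k) t)) => [/hasP[p /deg_t /eqP deg_p /eqP <-] // | none].
rewrite /fpair big_seq big1 ?eqxx // => p /(hasPn none).
by rewrite /kdelta => /negbTE ->; rewrite mulr0.
Qed.

Lemma Ttens_zg_of (G : groupType) n (g h : G) (e f : gen n) :
  Ttens (zg_of g) e (zg_of h) f = [:: (1, ((g, e), (h, f)))].
Proof. by []. Qed.

Section Diagonal.
Variables (G : groupType) (n : nat) (a : 'I_n -> G).
Notation K := (G * gen n)%type.

Lemma fpair_Pact Phi g (s : Pel G n) :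
  fpair Phi (Pact g s) = fpair (fun u : K => Phi (mul g u.1, u.2)) s.
Proof. by rewrite /fpair big_map. Qed.

Lemma fpair_Pgen Phi (r : ZG G) (e : gen n) :
  fpair Phi (Pgen r e) = fpair (fun h => Phi (h, e)) r.
Proof. by rewrite /fpair big_map. Qed.

Lemma coef_dT (t : Tel G n) k :
  coef (dT a t) k = fpair (fun uv : K * K => coef (dT1 a uv.1 uv.2) k) t.
Proof. exact: (coef_linear (fun uv : K * K => dT1 a uv.1 uv.2)). Qed.

Lemma coef_extend (D : gen n -> Tel G n) (s : Pel G n) k :
  coef (extend D s) k = fpair (fun u : K => coef (Tact u.1 (D u.2)) k) s.
Proof. exact: (coef_linear (fun u : K => Tact u.1 (D u.2))). Qed.

Lemma coef_dT1 (u v : K) k1 k2 :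
  coef (dT1 a u v) (k1, k2)
  = coef (dP1 a u) k1 * kdelta v k2 + (-1) ^+ gdeg u.2 * (kdelta u k1 * coef (dP1 a v) k2).
Proof.
rewrite /dT1 coef_cat !coefE /fpair !big_map mulr_suml !mulr_sumr.
by congr (_ + _); apply: eq_bigr => q _; rewrite kdelta_pair /=; ring.
Qed.

Lemma coef_dP1_X g k : coef (dP1 a (g, GX)) k = 0.
Proof. by rewrite coefE fpair_nil. Qed.

Lemma coef_dP1_Y g j k :
  coef (dP1 a (g, GY j)) k = kdelta (mul g (a j), GX) k - kdelta (g, GX) k.
Proof. by rewrite coefE /dP1 /= !fpair_cons fpair_nil mulg1; ring. Qed.

Lemma coef_dP1_W g k :
  coef (dP1 a (g, GW)) k
  = \sum_(i < n) (kdelta (mul g (prefix_prod a i), GY i) k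
                  + kdelta (mul g (mul (prefix_prod a i) (a i)), GY i) k).
Proof.
rewrite coefE /dP1 /= fpair_Pact fpair_flatten big_map enumT; apply: eq_bigr => i _.
by rewrite fpair_Pgen fox_relator.
Qed.

Definition Delta (e : gen n) : Tel G n :=
  match e with
  | GX => Ttens (zg_of one) GX (zg_of one) GX
  | GY i => Ttens (zg_of one) (GY i) (zg_of (a i)) GX
            ++ Ttens (zg_of one) GX (zg_of one) (GY i)
  | GW => Ttens (zg_of one) GX (zg_of one) GW ++ Delta11w a
          ++ Ttens (zg_of one) GW (zg_of one) GX
  end.

Lemma coef_Tact_DeltaY h i k1 k2 :
  coef (Tact h (Delta (GY i))) (k1, k2)
  = kdelta (h, GY i) k1 * kdelta (mul h (a i), GX) k2
    + kdelta (h, GX) k1 * kdelta (h, GY i) k2.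
Proof. by rewrite coefE /= !fpair_cons fpair_nil !kdelta_pair !mulg1 !mul1r addr0. Qed.

Definition chi_x (k : K) (m : nat) := kdelta (prefix_prod a m, GX) k.
Definition chi_y (k : K) (i : 'I_n) := kdelta (prefix_prod a i, GY i) k.
Definition chi_ay (k : K) (i : 'I_n) := kdelta (mul (prefix_prod a i) (a i), GY i) k.
Definition chi_ax (k : K) (i : 'I_n) := kdelta (mul (prefix_prod a i) (a i), GX) k.

Lemma coef_extend_dW k1 k2 :
  coef (extend Delta (dgen a GW)) (k1, k2)
  = \sum_(i < n) (chi_y k1 i * chi_ax k2 i + chi_x k1 i * chi_y k2 i
                  + chi_ay k1 i * chi_x k2 i.+1 + chi_ax k1 i * chi_ay k2 i).
Proof.
rewrite coef_extend fpair_flatten big_map enumT; apply: eq_bigr => i _.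
rewrite fpair_Pgen fox_relator /= !coef_Tact_DeltaY.
by rewrite /chi_x /chi_y /chi_ay /chi_ax -prefix_prodS; ring.
Qed.

Definition Delta11_summand (i : 'I_n) : Tel G n :=
  flatten [seq Ttens [:: (1, pre a j); (1, mul (pre a j) (a j))] (GY j)
                     (zg_of (pre a i)) (GY i)
          | j : 'I_n <- enum 'I_n & (j < i)%N]
  ++ flatten [seq Ttens [:: (1, pre a j); (1, mul (pre a j) (a j))] (GY j)
                        (zg_of (mul (pre a i) (a i))) (GY i)
             | j : 'I_n <- enum 'I_n & (j < i)%N]
  ++ Ttens (zg_of (pre a i)) (GY i) (zg_of (mul (pre a i) (a i))) (GY i).

Lemma Delta11wE : Delta11w a = flatten [seq Delta11_summand i | i <- enum 'I_n].
Proof. by []. Qed.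

Lemma coef_dT_Delta11_summand i k1 k2 :
  coef (dT a (Delta11_summand i)) (k1, k2)
  = \sum_(j < n | (j < i)%N)
      ((chi_x k1 j.+1 - chi_x k1 j) * (chi_y k2 i + chi_ay k2 i)
       - (chi_y k1 j + chi_ay k1 j) * (chi_x k2 i.+1 - chi_x k2 i))
    + ((chi_ax k1 i - chi_x k1 i) * chi_ay k2 i
       - chi_y k1 i * (chi_x k2 i.+1 - chi_ax k2 i)).
Proof.
rewrite coef_dT !fpair_cat !fpair_flatten !big_map !big_filter enumT addrA -big_split /=.
congr (_ + _); first apply: eq_bigr => j _.
all: rewrite /fpair /= !big_cons big_nil /= !coef_dT1 !coef_dP1_Y /= !pre_prefix_prod.
all: by rewrite /chi_x /chi_y /chi_ay /chi_ax -!prefix_prodS; ring.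
Qed.

Lemma coef_dT_DeltaW k1 k2 : eval_word a (relator n) = one ->
  coef (dT a (Delta GW)) (k1, k2)
  = chi_x k1 0%N * (\sum_(i < n) (chi_y k2 i + chi_ay k2 i))
    + \sum_(i < n) coef (dT a (Delta11_summand i)) (k1, k2)
    + (\sum_(i < n) (chi_y k1 i + chi_ay k1 i)) * chi_x k2 n.
Proof.
move=> relation.
rewrite /Delta !Ttens_zg_of Delta11wE coef_dT !fpair_cat fpair_flatten big_map enumT addrA.
under eq_bigr => i _ do rewrite -coef_dT.
congr (_ + _ + _).
all: rewrite fpair_cons fpair_nil addr0 mul1r coef_dT1 /= coef_dP1_X coef_dP1_W.
- rewrite mul0r add0r expr0 mul1r /chi_x prefix_prod0 !mulr_sumr.
  by apply: eq_bigr => i _; rewrite !mul1g.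
- rewrite mulr0 addr0 /chi_x (prefix_prod_relator relation) !mulr_suml.
  by apply: eq_bigr => i _; rewrite !mul1g.
Qed.

Lemma Delta_chain_map : eval_word a (relator n) = one ->
  forall e, feq (dT a (Delta e)) (extend Delta (dgen a e)).
Proof.
move=> relation [|i|] [k1 k2].
- by [].
- rewrite coef_dT coef_extend !fpair_cat !fpair_cons !fpair_nil !coef_dT1 /=.
  rewrite !coef_dP1_X !coef_dP1_Y /= !coefE !fpair_cons fpair_nil !kdelta_pair !mulg1 !mul1g.
  ring.
- rewrite coef_dT_DeltaW // coef_extend_dW.
  under [X in _ + X + _]eq_bigr => i _ do rewrite coef_dT_Delta11_summand.
  exact: sum_lower_triangle_telescope.
Qed.

Lemma Delta11w_bidegree :
  all (fun p => (gdeg p.2.1.2 == 1) && (gdeg p.2.2.2 == 1))%N (Delta11w a).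
Proof.
rewrite Delta11wE; apply/allP => p /flattenP[_ /mapP[i _ ->]].
rewrite /Delta11_summand mem_cat => /orP[|]; last rewrite mem_cat => /orP[|].
- by move=> /flattenP[_ /mapP[j _ ->]]; rewrite !inE => /orP[]/eqP->.
- by move=> /flattenP[_ /mapP[j _ ->]]; rewrite !inE => /orP[]/eqP->.
- by rewrite Ttens_zg_of inE => /eqP->.
Qed.

Lemma Delta_homog e : homog (gdeg e) (Delta e).
Proof.
apply: homog_all; case: e => [|i|] //=; rewrite !all_cat /= andbT.
by apply/allP => p /(allP Delta11w_bidegree) /andP[/eqP-> /eqP->].
Qed.

Lemma proj02_DeltaW : proj 0 2 (Delta GW) = Ttens (zg_of one) GX (zg_of one) GW.
Proof.
rewrite /Delta /proj !filter_cat /= cats0 (eq_in_filter (a2 := pred0)) ?filter_pred0 //.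
by move=> p /(allP Delta11w_bidegree) /andP[/eqP-> /eqP->].
Qed.

Lemma proj11_DeltaW : proj 1 1 (Delta GW) = Delta11w a.
Proof. by rewrite /Delta /proj !filter_cat (all_filterP Delta11w_bidegree) /= cats0. Qed.

End Diagonal.

Unset Implicit Arguments.

Theorem mainTheorem4 (n : nat) (G : groupType) (a : 'I_n -> G) :
  (2 <= n)%N ->
  is_presented a (relator n) ->
  exists D : gen n -> Tel G n,
    [/\ diag_approx a D,
        feq (D GX) (Ttens (zg_of one) GX (zg_of one) GX),
        (forall i : 'I_n,
          feq (D (GY i)) (Ttens (zg_of one) (GY i) (zg_of (a i)) GX
                          ++ Ttens (zg_of one) GX (zg_of one) (GY i))),
        feq (proj 0 2 (D GW)) (Ttens (zg_of one) GX (zg_of one) GW) &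
        feq (proj 1 1 (D GW)) (Delta11w a)].
Proof.
move=> _ [relation _]; exists (Delta a); split => //.
- split; [exact: Delta_homog | exact: Delta_chain_map |].
  by rewrite /epsT big_cons big_nil.
- by rewrite proj02_DeltaW.
- by rewrite proj11_DeltaW.
Qed.
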